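(* Fix $\kappa>0$ and $x_0\in\mathbb R^2$ with $\kappa|x_0|$ irrational. Let $m,\Phi,I,l,\alpha_0$ satisfy hypotheses (1)–(3) of Lemma (int1 est), and set $u(\alpha):=\Phi_l(\alpha)-\Phi_l(\alpha_0)$ (which does not change sign on $I$). Then the function $$f(\alpha):=\frac{d}{d\alpha}\Bigl[\frac{|u(\alpha)|^{1/2}}{\sin(\pi\kappa\Phi_l'(\alpha))}\Bigr],$$ defined on $I$ away from the zero set of $\Phi_l'$, changes sign at most $N$ times on $I$, where $N$ is independent of $m\neq0$ (and of $l$ and $I$).
   Context: $\vec\alpha=(\cos\alpha,\sin\alpha)$. $\Phi(\alpha):=-m\,\vec\alpha\cdot x_0$ with $m\in\mathbb Z\setminus\{0\}$; $\Phi_l(\alpha):=\Phi(\alpha)-(l/\kappa)\alpha$. Hypotheses of Lemma (int1 est): $I=[a,b]\subset[-\pi,\pi]$, $l\in\mathbb Z$; (1) $\Phi''(\alpha)\neq0$ on $(a,b)$; (2) $\alpha_0\in I$ with $\kappa\Phi'(\alpha_0)=l$ and $\Phi''(\alpha_0)\ne0$; (3) $|\kappa\Phi'(\alpha)-l|\le1/2$ on $I$. *)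

From Stdlib Require Import Reals ZArith.
From Coquelicot Require Import Coquelicot.
Open Scope R_scope.

(* x0 in R^2 as a pair; vec(alpha) . x0 = cos alpha * x0_1 + sin alpha * x0_2 *)
Definition Phi (m : Z) (x0 : R * R) (alpha : R) : R :=
  - IZR m * (cos alpha * fst x0 + sin alpha * snd x0).

Definition Phil (kappa : R) (m l : Z) (x0 : R * R) (alpha : R) : R :=
  Phi m x0 alpha - (IZR l / kappa) * alpha.

Definition norm2 (x0 : R * R) : R := sqrt (fst x0 ^ 2 + snd x0 ^ 2).

Definition irrational (x : R) : Prop :=
  ~ exists p q : Z, q <> 0%Z /\ x = IZR p / IZR q.

Definition u_fun (kappa : R) (m l : Z) (x0 : R * R) (alpha0 alpha : R) : R :=
  Phil kappa m l x0 alpha - Phil kappa m l x0 alpha0.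

Definition f_fun (kappa : R) (m l : Z) (x0 : R * R) (alpha0 : R) (alpha : R) : R :=
  Derive (fun beta => sqrt (Rabs (u_fun kappa m l x0 alpha0 beta))
                      / sin (PI * kappa * Derive (Phil kappa m l x0) beta)) alpha.

Definition sign_changes_at_most (D : R -> Prop) (g : R -> R) (N : nat) : Prop :=
  ~ exists t : nat -> R,
      (forall i, (i <= S N)%nat -> D (t i)) /\
      (forall i, (i <= N)%nat -> t i < t (S i) /\ g (t i) * g (t (S i)) < 0).

From Stdlib Require Import Reals ZArith Lra Lia Psatz Nsatz ClassicalEpsilon.
From Coquelicot Require Import Coquelicot.
Open Scope R_scope.

(* Put W = kappa Phi_l', Q = kappa Phi'' and V = kappa u, so that W' = Q, Q' = -(W + l),
   V' = W, W(alpha0) = V(alpha0) = 0 and |W| <= 1/2. By (1) and (2) Q has a constant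
   sign on I, which we may take positive; then W increases through its only zero alpha0
   and V > 0 away from alpha0. On each side of alpha0 the derivative f is a positive
   multiple of h = W sin(pi W) - 2 pi V Q cos(pi W) = pi Q cos(pi W) M, where
   M = W tan(pi W) / (pi Q) - 2 V vanishes at alpha0; M' is a multiple of constant sign
   of G = Q^2 + (W + l) Z(2 pi W) / (2 pi), and G' is a multiple of constant sign of
   l + K(2 pi W) / (2 pi) with K increasing on (-pi, 0) and on (0, pi). A monotone
   function changes sign at most once, and by Rolle each antiderivative adds at most one
   sign change, none when it vanishes at the endpoint alpha0. So f changes sign at most
   twice on each side of alpha0, and at most 7 times on I, whatever m, l and I are. *)

Lemma sign_changes_subset D D' g N :
  (forall x, D' x -> D x) ->
  sign_changes_at_most D g N -> sign_changes_at_most D' g N.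
Proof. intros HD H [t [Ht1 Ht2]]. apply H. exists t. split; auto. Qed.

Lemma sign_changes_transfer D g g' N :
  (forall x y, D x -> D y -> g x * g y < 0 -> g' x * g' y < 0) ->
  sign_changes_at_most D g' N -> sign_changes_at_most D g N.
Proof.
  intros Hs H [t [Ht1 Ht2]]. apply H. exists t. split; auto.
  intros i Hi. destruct (Ht2 i Hi) as [Hlt Hneg].
  split; auto. apply Hs; auto; apply Ht1; lia.
Qed.

Lemma sign_changes_ext D g g' N :
  (forall x, D x -> g x = g' x) ->
  sign_changes_at_most D g' N -> sign_changes_at_most D g N.
Proof.
  intros Hg. apply sign_changes_transfer. intros x y Dx Dy. rewrite (Hg x Dx), (Hg y Dy). auto.
Qed.

Lemma sign_changes_mul_const_sign D g c g' N :
  (forall x, D x -> g x = c x * g' x) ->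
  (forall x, D x -> 0 < c x) \/ (forall x, D x -> c x < 0) ->
  sign_changes_at_most D g' N -> sign_changes_at_most D g N.
Proof.
  intros Hg Hc. apply sign_changes_transfer. intros x y Dx Dy Hneg.
  rewrite (Hg x Dx), (Hg y Dy) in Hneg.
  assert (0 < c x * c y) by (destruct Hc as [Hc|Hc]; pose proof (Hc x Dx); pose proof (Hc y Dy); nra).
  nra.
Qed.

Lemma sign_changes_monotone D g :
  (forall x y, D x -> D y -> x <= y -> g x <= g y) -> sign_changes_at_most D g 1.
Proof.
  intros Hm [t [Ht1 Ht2]].
  destruct (Ht2 0%nat ltac:(lia)) as [Hlt0 Hneg0].
  destruct (Ht2 1%nat ltac:(lia)) as [Hlt1 Hneg1].
  pose proof (Hm _ _ (Ht1 0%nat ltac:(lia)) (Ht1 1%nat ltac:(lia)) ltac:(lra)).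
  pose proof (Hm _ _ (Ht1 1%nat ltac:(lia)) (Ht1 2%nat ltac:(lia)) ltac:(lra)).
  destruct (Rlt_le_dec 0 (g (t 1%nat))); nra.
Qed.

Lemma sign_changes_point a g : sign_changes_at_most (fun x => x = a) g 0.
Proof.
  intros [t [Ht1 Ht2]]. destruct (Ht2 0%nat ltac:(lia)) as [Hlt _].
  rewrite (Ht1 0%nat ltac:(lia)), (Ht1 1%nat ltac:(lia)) in Hlt. lra.
Qed.

Lemma sign_changes_union D1 D2 g N1 N2 :
  (forall x y, D1 x -> D2 y -> x < y) ->
  sign_changes_at_most D1 g N1 -> sign_changes_at_most D2 g N2 ->
  sign_changes_at_most (fun x => D1 x \/ D2 x) g (N1 + N2 + 1).
Proof.
  intros Hxy H1 H2 [t [Ht1 Ht2]].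
  assert (Hinc : forall i j, (i < j <= S (N1 + N2 + 1))%nat -> t i < t j).
  { intros i j [Hij Hj]. induction Hij as [|j Hij IH].
    - apply Ht2; lia.
    - apply Rlt_trans with (t j); [apply IH; lia | apply Ht2; lia]. }
  destruct (Ht1 (S N1) ltac:(lia)) as [HD|HD].
  - apply H1. exists t. split.
    + intros i Hi. destruct (Nat.eq_dec i (S N1)) as [->|Hne]; auto.
      destruct (Ht1 i ltac:(lia)) as [HDi|HDi]; auto.
      pose proof (Hxy _ _ HD HDi). pose proof (Hinc i (S N1) ltac:(lia)). lra.
    + intros i Hi. apply Ht2. lia.
  - apply H2. exists (fun i => t (S N1 + i)%nat). split.
    + intros [|i] Hi; [rewrite Nat.add_0_r; auto|].
      destruct (Ht1 (S N1 + S i)%nat ltac:(lia)) as [HDi|HDi]; auto.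
      pose proof (Hxy _ _ HDi HD). pose proof (Hinc (S N1) (S N1 + S i)%nat ltac:(lia)). lra.
    + intros i Hi. replace (S N1 + S i)%nat with (S (S N1 + i)) by lia. apply Ht2. lia.
Qed.

Lemma rolle_alternating D g dg (T : nat -> R) k :
  (forall i, (i <= S k)%nat -> T i < T (S i)) ->
  (forall i x, (i <= S k)%nat -> T i <= x <= T (S i) -> is_derive g x (dg x)) ->
  (forall i x, (i <= S k)%nat -> T i < x < T (S i) -> D x) ->
  (forall i, (i <= S k)%nat -> g (T i) * g (T (S i)) <= 0) ->
  (forall i, (1 <= i <= S k)%nat -> g (T i) <> 0) ->
  ~ sign_changes_at_most D dg k.
Proof.
  intros Hinc Hd HD Halt Hnz Hsc.
  assert (Hmvt : forall i, exists c, (i <= S k)%nat ->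
    T i < c < T (S i) /\ g (T (S i)) - g (T i) = dg c * (T (S i) - T i)).
  { intros i. destruct (le_lt_dec i (S k)) as [Hi|Hi].
    - destruct (MVT_cor2 g dg (T i) (T (S i)) (Hinc i Hi)) as [c [Hc1 Hc2]].
      + intros x Hx. apply is_derive_Reals, (Hd i); auto.
      + exists c. auto.
    - exists 0. lia. }
  destruct (choice _ Hmvt) as [c Hc].
  apply Hsc. exists c. split.
  - intros i Hi. destruct (Hc i Hi) as [Hci _]. apply (HD i); auto.
  - intros i Hi.
    destruct (Hc i ltac:(lia)) as [[Hc1 Hc2] Hslope1].
    destruct (Hc (S i) ltac:(lia)) as [[Hc3 Hc4] Hslope2].
    split; [lra|].
    assert (Hsec : (g (T (S i)) - g (T i)) * (g (T (S (S i))) - g (T (S i))) < 0).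
    { pose proof (Halt i ltac:(lia)). pose proof (Halt (S i) ltac:(lia)).
      pose proof (Hnz (S i) ltac:(lia)).
      set (g0 := g (T i)) in *. set (g1 := g (T (S i))) in *. set (g2 := g (T (S (S i)))) in *.
      destruct (Rlt_le_dec 0 g1).
      - assert (g0 <= 0) by nra. assert (g2 <= 0) by nra. nra.
      - assert (g1 < 0) by lra. assert (0 <= g0) by nra. assert (0 <= g2) by nra. nra. }
    rewrite Hslope1, Hslope2 in Hsec.
    assert (0 < (T (S i) - T i) * (T (S (S i)) - T (S i))) by (apply Rmult_lt_0_compat; lra).
    nra.
Qed.

Lemma sign_changes_deriv D g dg k :
  (forall x y z, D x -> D y -> x <= z <= y -> D z) ->
  (forall x, D x -> is_derive g x (dg x)) ->
  sign_changes_at_most D dg k -> sign_changes_at_most D g (S k).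
Proof.
  intros Hconv Hd Hsc [t [Ht1 Ht2]]. apply (rolle_alternating D g dg t k); auto.
  - intros i Hi. apply Ht2. lia.
  - intros i x Hi Hx. apply Hd, (Hconv (t i) (t (S i))); auto; apply Ht1; lia.
  - intros i x Hi Hx. apply (Hconv (t i) (t (S i))); try lra; apply Ht1; lia.
  - intros i Hi. apply Rlt_le, Ht2. lia.
  - intros i Hi Hz. destruct (Ht2 i ltac:(lia)) as [_ Hneg]. rewrite Hz in Hneg. lra.
Qed.

(* A zero at an endpoint plays the role of an extra sign change, so no change is lost. *)
Lemma sign_changes_deriv_vanishing_end lo hi p g dg k :
  (p = lo \/ p = hi) -> g p = 0 ->
  (forall x, lo < x < hi \/ x = p -> is_derive g x (dg x)) ->
  sign_changes_at_most (fun x => lo < x < hi) dg k ->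
  sign_changes_at_most (fun x => lo < x < hi) g k.
Proof.
  intros Hp Hg0 Hd Hsc [t [Ht1 Ht2]].
  assert (Hnz : forall i, (i <= S k)%nat -> g (t i) <> 0).
  { intros i Hi Hz. destruct (Nat.eq_dec i (S k)) as [->|Hne].
    - destruct (Ht2 k ltac:(lia)) as [_ Hneg]. rewrite Hz in Hneg. lra.
    - destruct (Ht2 i ltac:(lia)) as [_ Hneg]. rewrite Hz in Hneg. lra. }
  destruct Hp as [Hp|Hp]; subst p.
  - refine (rolle_alternating _ g dg (fun i => match i with O => lo | S j => t j end) k _ _ _ _ _ Hsc).
    + intros [|i] Hi; [apply Ht1|apply Ht2]; lia.
    + intros [|i] x Hi Hx; apply Hd.
      * destruct (Req_dec x lo); [right; auto|left].
        pose proof (Ht1 0%nat ltac:(lia)). lra.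
      * pose proof (Ht1 i ltac:(lia)). pose proof (Ht1 (S i) ltac:(lia)). left. lra.
    + intros [|i] x Hi Hx.
      * pose proof (Ht1 0%nat ltac:(lia)). lra.
      * pose proof (Ht1 i ltac:(lia)). pose proof (Ht1 (S i) ltac:(lia)). lra.
    + intros [|i] Hi; [rewrite Hg0; lra | apply Rlt_le, Ht2; lia].
    + intros [|i] Hi; [lia | apply Hnz; lia].
  - set (T := fun i => if Nat.leb i (S k) then t i else hi).
    assert (HT : forall i, (i <= S k)%nat -> T i = t i).
    { intros i Hi. unfold T. rewrite (proj2 (Nat.leb_le _ _) Hi). auto. }
    assert (HTend : T (S (S k)) = hi).
    { unfold T. rewrite (proj2 (Nat.leb_gt _ _) (Nat.lt_succ_diag_r _)). auto. }
    assert (Hseg : forall i, (i <= S k)%nat -> lo < T i /\ T i < T (S i) /\ T (S i) <= hi).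
    { intros i Hi. rewrite HT by lia. pose proof (Ht1 i Hi).
      destruct (Nat.eq_dec i (S k)) as [->|Hne].
      - rewrite HTend. lra.
      - rewrite HT by lia. pose proof (Ht1 (S i) ltac:(lia)). split; [lra|split; [apply Ht2; lia|lra]]. }
    refine (rolle_alternating _ g dg T k _ _ _ _ _ Hsc).
    + intros i Hi. apply Hseg, Hi.
    + intros i x Hi Hx. apply Hd. pose proof (Hseg i Hi).
      destruct (Req_dec x hi); [right; auto|left; lra].
    + intros i x Hi Hx. pose proof (Hseg i Hi). lra.
    + intros i Hi. rewrite HT by lia. destruct (Nat.eq_dec i (S k)) as [->|Hne].
      * rewrite HTend, Hg0. lra.
      * rewrite HT by lia. apply Rlt_le, Ht2. lia.
    + intros i Hi. rewrite HT by lia. apply Hnz. lia.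
Qed.

Lemma lt_of_is_derive_pos F dF x y :
  x < y -> (forall z, x <= z <= y -> is_derive F z (dF z)) ->
  (forall z, x < z < y -> 0 < dF z) -> F x < F y.
Proof.
  intros Hxy Hd Hpos. destruct (MVT_cor2 F dF x y Hxy) as [c [Hc1 Hc2]].
  - intros z Hz. apply is_derive_Reals, Hd, Hz.
  - assert (0 < dF c * (y - x)) by (apply Rmult_lt_0_compat; [apply Hpos|]; lra). lra.
Qed.

Lemma same_sign_of_nonvanishing g a b c :
  continuity g -> a <= c <= b -> g c <> 0 ->
  (forall x, a < x < b -> g x <> 0) ->
  forall x, a < x < b -> 0 < g c * g x.
Proof.
  intros Hg Hc Hgc Hnz x Hx.
  destruct (Rlt_le_dec 0 (g c * g x)) as [Hpos|Hle]; auto. exfalso.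
  destruct (IVT_gen g x c 0 Hg) as [z [Hz Hgz]].
  { unfold Rmin, Rmax. destruct (Rle_dec (g x) (g c)); split; nra. }
  assert (z <> x) by (intros ->; apply (Hnz x Hx Hgz)).
  assert (z <> c) by (intros ->; apply (Hgc Hgz)).
  apply (Hnz z); auto. revert Hz. unfold Rmin, Rmax. destruct (Rle_dec x c); lra.
Qed.

Lemma sin_PI_mul_neq0 w : 0 < Rabs w < 1/2 -> sin (PI * w) <> 0.
Proof.
  intros Hw. pose proof PI_RGT_0. destruct (Rcase_abs w) as [Hneg|Hnn].
  - rewrite Rabs_left in Hw by auto.
    assert (0 < sin (- (PI * w))) by (apply sin_gt_0; nra). rewrite sin_neg in *. lra.
  - rewrite Rabs_right in Hw by auto.
    assert (0 < sin (PI * w)) by (apply sin_gt_0; nra). lra.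
Qed.

Lemma cos_PI_mul_pos w : Rabs w < 1/2 -> 0 < cos (PI * w).
Proof. intros Hw. pose proof PI_RGT_0. apply Rabs_def2 in Hw. apply cos_gt_0; nra. Qed.

Definition Stc t := sin t - t * cos t.
Definition Nt t := t * (1 + cos t * cos t) - 2 * sin t * cos t.
Definition N3t t := 3 * sin t * (1 + cos t * cos t) - t * cos t * (5 + cos t * cos t).
Definition N4t t := t * (5 + 3 * (cos t * cos t)) - 8 * sin t * cos t.
Definition Pt t := Stc t * Stc t + t * Nt t.
Definition Kt t := t - t * sin t * Stc t / Pt t.
Definition Zt t := t * sin t / Stc t.

Lemma pos_on_0_PI F dF :
  F 0 = 0 -> (forall t, 0 <= t < PI -> is_derive F t (dF t)) ->
  (forall t, 0 < t < PI -> 0 < dF t) -> forall t, 0 < t < PI -> 0 < F t.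
Proof.
  intros H0 Hd Hpos t Ht. rewrite <- H0.
  apply (lt_of_is_derive_pos F dF); try lra.
  - intros z Hz. apply Hd. lra.
  - intros z Hz. apply Hpos. lra.
Qed.

Ltac trig_deriv x := auto_derive; auto; pose proof (sin2_cos2 x) as Hpyth; unfold Rsqr in Hpyth; nsatz.

Lemma Stc_pos t : 0 < t < PI -> 0 < Stc t.
Proof.
  apply (pos_on_0_PI Stc (fun t => t * sin t)).
  - unfold Stc. rewrite sin_0, cos_0. ring.
  - intros y Hy. unfold Stc. auto_derive; auto. ring.
  - intros y Hy. apply Rmult_lt_0_compat; [lra | apply sin_gt_0; lra].
Qed.

Lemma Nt_pos t : 0 < t < PI -> 0 < Nt t.
Proof.
  apply (pos_on_0_PI Nt (fun t => sin t * (2 * Stc t + sin t))).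
  - unfold Nt. rewrite sin_0, cos_0. ring.
  - intros y Hy. unfold Nt, Stc. trig_deriv y.
  - intros y Hy. pose proof (Stc_pos y Hy). pose proof (sin_gt_0 y ltac:(lra) ltac:(lra)).
    apply Rmult_lt_0_compat; lra.
Qed.

Lemma N4t_pos t : 0 < t < PI -> 0 < N4t t.
Proof.
  apply (pos_on_0_PI N4t (fun t => sin t * (6 * Stc t + 7 * sin t))).
  - unfold N4t. rewrite sin_0, cos_0. ring.
  - intros y Hy. unfold N4t, Stc. trig_deriv y.
  - intros y Hy. pose proof (Stc_pos y Hy). pose proof (sin_gt_0 y ltac:(lra) ltac:(lra)).
    apply Rmult_lt_0_compat; lra.
Qed.

Lemma N3t_pos t : 0 < t < PI -> 0 < N3t t.
Proof.
  apply (pos_on_0_PI N3t (fun t => sin t * N4t t)).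
  - unfold N3t. rewrite sin_0, cos_0. ring.
  - intros y Hy. unfold N3t, N4t. trig_deriv y.
  - intros y Hy. pose proof (N4t_pos y Hy). pose proof (sin_gt_0 y ltac:(lra) ltac:(lra)).
    apply Rmult_lt_0_compat; lra.
Qed.

(* [Stc], [Nt] and [N3t] are odd. *)
Lemma odd_mul_pos t : 0 < Rabs t < PI -> 0 < t * Stc t /\ 0 < t * Nt t /\ 0 < t * N3t t.
Proof.
  intros Ht. unfold Stc, Nt, N3t. destruct (Rcase_abs t) as [Hneg|Hnn].
  - rewrite Rabs_left in Ht by auto.
    pose proof (Stc_pos (-t) Ht). pose proof (Nt_pos (-t) Ht). pose proof (N3t_pos (-t) Ht).
    unfold Stc, Nt, N3t in *. rewrite sin_neg, cos_neg in *. repeat split; nra.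
  - rewrite Rabs_right in Ht by auto.
    pose proof (Stc_pos t Ht). pose proof (Nt_pos t Ht). pose proof (N3t_pos t Ht).
    unfold Stc, Nt, N3t in *. repeat split; nra.
Qed.

Lemma Pt_pos t : 0 < Rabs t < PI -> 0 < Pt t.
Proof. intros Ht. destruct (odd_mul_pos t Ht) as [_ [HN _]]. unfold Pt. nra. Qed.

Lemma Stc_neq0 t : 0 < Rabs t < PI -> Stc t <> 0.
Proof. intros Ht HS. destruct (odd_mul_pos t Ht) as [H _]. rewrite HS in H. lra. Qed.

Lemma Kt_deriv t : Pt t <> 0 ->
  is_derive Kt t (t * Stc t * (3 * Stc t * Nt t + t * N3t t) / (Pt t * Pt t)).
Proof.
  intros HP.
  set (dN := sin t * sin t - t * t * cos t * cos t + t * t * sin t * sin t).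
  set (dP := - 2 * sin t * cos t + 4 * t * sin t * sin t + 2 * t - 4 * t * t * sin t * cos t).
  assert (Hnum : Pt t * Pt t - dN * Pt t + t * sin t * Stc t * dP
                 = t * Stc t * (3 * Stc t * Nt t + t * N3t t)).
  { unfold dN, dP, Pt, Stc, Nt, N3t. pose proof (sin2_cos2 t) as Hpyth. unfold Rsqr in Hpyth. nsatz. }
  rewrite <- Hnum. unfold dN, dP, Kt, Pt, Stc, Nt in *. auto_derive; auto. field. auto.
Qed.

Lemma Kt_lt t1 t2 : t1 < t2 -> (0 < t1 /\ t2 < PI) \/ (- PI < t1 /\ t2 < 0) -> Kt t1 < Kt t2.
Proof.
  intros H12 Hside.
  assert (Habs : forall t, t1 <= t <= t2 -> 0 < Rabs t < PI).
  { intros t Ht. destruct Hside as [[H1 H2]|[H1 H2]];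
      [rewrite Rabs_right | rewrite Rabs_left]; lra. }
  apply (lt_of_is_derive_pos Kt (fun t => t * Stc t * (3 * Stc t * Nt t + t * N3t t) / (Pt t * Pt t)) t1 t2 H12).
  - intros t Ht. apply Kt_deriv. apply Rgt_not_eq, Pt_pos, Habs, Ht.
  - intros t Ht. pose proof (Habs t ltac:(lra)) as Hb.
    destruct (odd_mul_pos t Hb) as [HS [HN HN3]]. pose proof (Pt_pos t Hb).
    assert (0 < t * t) by (destruct (Rcase_abs t); [rewrite Rabs_left in Hb | rewrite Rabs_right in Hb]; nra).
    assert (0 < Stc t * Nt t) by nra.
    apply Rdiv_lt_0_compat; [apply Rmult_lt_0_compat|]; nra.
Qed.

Lemma Zt_deriv t : Stc t <> 0 -> is_derive Zt t ((sin t * sin t - t * t) / (Stc t * Stc t)).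
Proof.
  intros HS. unfold Zt, Stc in *. auto_derive; auto.
  pose proof (sin2_cos2 t) as Hpyth. unfold Rsqr in Hpyth.
  replace (t * t) with (t * t * (sin t * sin t + cos t * cos t)) by (rewrite Hpyth; ring).
  field. auto.
Qed.

Section Phase.

Variables (W Q V : R -> R) (l : R).
Hypothesis W_deriv : forall x, is_derive W x (Q x).
Hypothesis Q_deriv : forall x, is_derive Q x (- (W x + l)).
Hypothesis V_deriv : forall x, is_derive V x (W x).

Definition theta x := 2 * PI * W x.
Definition Gfun x := Q x * Q x + (W x + l) * Zt (theta x) / (2 * PI).
Definition Mfun x := W x * sin (PI * W x) / (PI * Q x * cos (PI * W x)) - 2 * V x.
Definition hfun x := W x * sin (PI * W x) - 2 * PI * V x * Q x * cos (PI * W x).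
Definition quotient k y := sqrt (Rabs (V y / k)) / sin (PI * W y).

Let Derive_W x : Derive W x = Q x.
Proof. apply is_derive_unique, W_deriv. Qed.
Let Derive_Q x : Derive Q x = - (W x + l).
Proof. apply is_derive_unique, Q_deriv. Qed.
Let Derive_V x : Derive V x = W x.
Proof. apply is_derive_unique, V_deriv. Qed.
Let ex_derive_W x : ex_derive W x.
Proof. eexists; apply W_deriv. Qed.
Let ex_derive_Q x : ex_derive Q x.
Proof. eexists; apply Q_deriv. Qed.
Let ex_derive_V x : ex_derive V x.
Proof. eexists; apply V_deriv. Qed.

Lemma theta_deriv x : is_derive theta x (2 * PI * Q x).
Proof. apply (is_derive_scal W), W_deriv. Qed.

Lemma Gfun_deriv x : Stc (theta x) <> 0 -> Pt (theta x) <> 0 ->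
  is_derive Gfun x
    (- Q x * (Pt (theta x) / (Stc (theta x) * Stc (theta x))) * (l + Kt (theta x) / (2 * PI))).
Proof.
  intros HS HP. pose proof PI_RGT_0. unfold Gfun, theta in *. auto_derive.
  - repeat split; auto. eexists; apply Zt_deriv; auto.
  - rewrite Derive_W, Derive_Q.
    replace (Derive (fun y => Zt y) (2 * PI * W x)) with
      ((sin (theta x) * sin (theta x) - theta x * theta x) / (Stc (theta x) * Stc (theta x)))
      by (symmetry; apply is_derive_unique, Zt_deriv; auto).
    unfold theta, Kt, Zt. unfold Pt, Nt, Stc in *. field. lra.
Qed.

Definition dMfun x :=
  (Q x * Q x * Stc (theta x) + (W x + l) * W x * sin (theta x))
  / (2 * PI * Q x * Q x * cos (PI * W x) * cos (PI * W x)).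

Lemma Mfun_deriv x : Q x <> 0 -> cos (PI * W x) <> 0 -> is_derive Mfun x (dMfun x).
Proof.
  intros HQ Hcos. pose proof PI_RGT_0.
  assert (Hsin2 : sin (theta x) = 2 * sin (PI * W x) * cos (PI * W x)).
  { unfold theta. rewrite <- sin_2a. f_equal. ring. }
  assert (Hcos2 : cos (theta x) = cos (PI * W x) * cos (PI * W x) - sin (PI * W x) * sin (PI * W x)).
  { unfold theta. rewrite <- cos_2a. f_equal. ring. }
  unfold Mfun. auto_derive.
  - repeat split; auto. apply Rmult_integral_contrapositive; split; auto.
    apply Rmult_integral_contrapositive; split; auto. lra.
  - rewrite Derive_W, Derive_Q, Derive_V.
    unfold dMfun, Stc. rewrite Hsin2, Hcos2. unfold theta.
    field. repeat split; auto. lra.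
Qed.

Lemma dMfun_eq x : Q x <> 0 -> cos (PI * W x) <> 0 -> Stc (theta x) <> 0 ->
  dMfun x = Stc (theta x) / (2 * PI * Q x * Q x * cos (PI * W x) * cos (PI * W x)) * Gfun x.
Proof.
  intros HQ Hcos HS. pose proof PI_RGT_0. unfold dMfun, Gfun, Zt. unfold theta in *.
  field. repeat split; auto. lra.
Qed.

Lemma hfun_eq x : Q x <> 0 -> cos (PI * W x) <> 0 ->
  hfun x = PI * Q x * cos (PI * W x) * Mfun x.
Proof. intros. pose proof PI_RGT_0. unfold hfun, Mfun. field. repeat split; auto. lra. Qed.

Lemma Mfun_vanishes a0 : W a0 = 0 -> V a0 = 0 -> Mfun a0 = 0.
Proof. intros HW HV. unfold Mfun. rewrite HW, HV. unfold Rdiv. ring. Qed.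

Lemma quotient_deriv k x : 0 < k -> 0 < V x -> sin (PI * W x) <> 0 ->
  is_derive (quotient k) x
    (hfun x / (2 * k * sqrt (V x / k) * (sin (PI * W x) * sin (PI * W x)))).
Proof.
  intros Hk HV Hsin. pose proof PI_RGT_0.
  assert (Hpos : 0 < V x / k) by (apply Rdiv_lt_0_compat; auto).
  assert (Hsq : 0 < sqrt (V x / k)) by (apply sqrt_lt_R0; auto).
  assert (Hsqsq : sqrt (V x / k) * sqrt (V x / k) = V x / k) by (apply sqrt_sqrt; lra).
  unfold quotient. auto_derive.
  - rewrite Rabs_right by lra. repeat split; auto. lra.
  - rewrite Derive_W, Derive_V. rewrite Rabs_right by lra. unfold hfun.
    change (V x * / k) with (V x / k). rewrite sign_eq_1 by auto.
    set (r := sqrt (V x / k)) in *.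
    replace (V x) with (k * (r * r)) by (rewrite Hsqsq; field; lra).
    field. repeat split; lra.
Qed.

Section Interval.

Variables lo hi : R.
Let I x := lo < x < hi.
Hypothesis Q_pos : forall x, I x -> 0 < Q x.
Hypothesis W_small : forall x, I x -> Rabs (W x) < 1/2.
Hypothesis W_sign : (forall x, I x -> 0 < W x) \/ (forall x, I x -> W x < 0).

Let I_convex x y z : I x -> I y -> x <= z <= y -> I z.
Proof. unfold I. lra. Qed.

Lemma theta_bound x : I x -> 0 < Rabs (theta x) < PI.
Proof.
  intros Hx. pose proof PI_RGT_0. pose proof (W_small x Hx).
  assert (W x <> 0) by (destruct W_sign as [Hs|Hs]; specialize (Hs x Hx); lra).
  unfold theta. rewrite Rabs_mult, (Rabs_right (2 * PI)) by lra.
  pose proof (Rabs_pos_lt (W x) ltac:(auto)). split; nra.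
Qed.

Lemma Gfun_sign_changes : sign_changes_at_most I Gfun 2.
Proof.
  pose proof PI_RGT_0.
  assert (Htheta_lt : forall x y, I x -> I y -> x < y -> theta x < theta y).
  { intros x y Hx Hy Hxy. apply (lt_of_is_derive_pos theta (fun z => 2 * PI * Q z) x y Hxy).
    - intros z _. apply theta_deriv.
    - intros z Hz. pose proof (Q_pos z (I_convex x y z Hx Hy ltac:(lra))). nra. }
  assert (Hfactor : sign_changes_at_most I (fun x => l + Kt (theta x) / (2 * PI)) 1).
  { apply sign_changes_monotone. intros x y Hx Hy Hxy.
    destruct (Req_dec x y) as [->|Hne]; [lra|].
    assert (HK : Kt (theta x) < Kt (theta y)).
    { apply Kt_lt; [apply Htheta_lt; auto; lra|].
      pose proof (theta_bound x Hx) as Hbx. pose proof (theta_bound y Hy) as Hby.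
      unfold theta in *. destruct W_sign as [Hs|Hs]; [left|right];
        pose proof (Hs x Hx); pose proof (Hs y Hy);
        [rewrite Rabs_right in Hbx, Hby | rewrite Rabs_left in Hbx, Hby]; nra. }
    assert (0 < / (2 * PI)) by (apply Rinv_0_lt_compat; lra).
    unfold Rdiv. nra. }
  apply (sign_changes_deriv I Gfun (fun x =>
    - Q x * (Pt (theta x) / (Stc (theta x) * Stc (theta x))) * (l + Kt (theta x) / (2 * PI)))
    1 I_convex).
  - intros x Hx. pose proof (theta_bound x Hx).
    apply Gfun_deriv; [apply Stc_neq0 | apply Rgt_not_eq, Pt_pos]; auto.
  - refine (sign_changes_mul_const_sign I _ _ _ 1 (fun x _ => eq_refl) _ Hfactor).
    right. intros x Hx. pose proof (theta_bound x Hx) as Hb. pose proof (Q_pos x Hx).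
    pose proof (Pt_pos _ Hb). pose proof (Stc_neq0 _ Hb).
    assert (0 < Pt (theta x) / (Stc (theta x) * Stc (theta x))).
    { apply Rdiv_lt_0_compat; auto. apply Rsqr_pos_lt; auto. }
    nra.
Qed.

Variable a0 : R.
Hypothesis a0_end : a0 = lo \/ a0 = hi.
Hypothesis W_a0 : W a0 = 0.
Hypothesis V_a0 : V a0 = 0.
Hypothesis Q_a0 : 0 < Q a0.

Lemma hfun_sign_changes : sign_changes_at_most I hfun 2.
Proof.
  pose proof PI_RGT_0.
  assert (Hcos : forall x, I x -> 0 < cos (PI * W x)) by (intros; apply cos_PI_mul_pos, W_small; auto).
  assert (HdM : sign_changes_at_most I dMfun 2).
  { apply (sign_changes_mul_const_sign I _
      (fun x => Stc (theta x) / (2 * PI * Q x * Q x * cos (PI * W x) * cos (PI * W x))) Gfun 2).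
    - intros x Hx. pose proof (Q_pos x Hx). pose proof (Hcos x Hx).
      apply dMfun_eq; try lra. apply Stc_neq0, theta_bound, Hx.
    - assert (Hden : forall x, I x -> 0 < 2 * PI * Q x * Q x * cos (PI * W x) * cos (PI * W x)).
      { intros x Hx. pose proof (Q_pos x Hx). pose proof (Hcos x Hx).
        repeat (apply Rmult_lt_0_compat; try lra). }
      destruct W_sign as [Hs|Hs]; [left|right]; intros x Hx;
        pose proof (Hs x Hx); pose proof (Hden x Hx);
        destruct (odd_mul_pos _ (theta_bound x Hx)) as [HS _].
      + assert (0 < theta x) by (unfold theta; apply Rmult_lt_0_compat; lra).
        apply Rdiv_lt_0_compat; auto. nra.
      + assert (theta x < 0) by (unfold theta; nra).
        assert (Stc (theta x) < 0) by nra.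
        unfold Rdiv. pose proof (Rinv_0_lt_compat _ (Hden x Hx)). nra.
    - apply Gfun_sign_changes. }
  assert (HM : sign_changes_at_most I Mfun 2).
  { apply (sign_changes_deriv_vanishing_end lo hi a0 Mfun dMfun 2 a0_end).
    - apply Mfun_vanishes; auto.
    - intros x [Hx | ->].
      + pose proof (Q_pos x Hx). pose proof (Hcos x Hx). apply Mfun_deriv; lra.
      + apply Mfun_deriv; [lra|]. rewrite W_a0, Rmult_0_r, cos_0. lra.
    - exact HdM. }
  apply (sign_changes_mul_const_sign I _ (fun x => PI * Q x * cos (PI * W x)) Mfun 2); auto.
  - intros x Hx. pose proof (Q_pos x Hx). pose proof (Hcos x Hx). apply hfun_eq; lra.
  - left. intros x Hx. pose proof (Q_pos x Hx). pose proof (Hcos x Hx).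
    repeat (apply Rmult_lt_0_compat; try lra).
Qed.

Lemma quotient_sign_changes_interval k :
  0 < k -> (forall x, I x -> 0 < V x) -> sign_changes_at_most I (Derive (quotient k)) 2.
Proof.
  intros Hk HV.
  assert (Hsin : forall x, I x -> sin (PI * W x) <> 0).
  { intros x Hx. apply sin_PI_mul_neq0. split; [|apply W_small, Hx].
    apply Rabs_pos_lt. destruct W_sign as [Hs|Hs]; specialize (Hs x Hx); lra. }
  apply (sign_changes_mul_const_sign I _
    (fun x => / (2 * k * sqrt (V x / k) * (sin (PI * W x) * sin (PI * W x)))) hfun 2).
  - intros x Hx. rewrite Rmult_comm.
    apply is_derive_unique, quotient_deriv; auto.
  - left. intros x Hx. apply Rinv_0_lt_compat.
    pose proof (sqrt_lt_R0 _ (Rdiv_lt_0_compat _ _ (HV x Hx) Hk)).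
    pose proof (Rsqr_pos_lt _ (Hsin x Hx)). unfold Rsqr in *.
    repeat (apply Rmult_lt_0_compat; try lra).
  - apply hfun_sign_changes.
Qed.

End Interval.

Lemma W_V_signs a b a0 :
  a <= a0 <= b -> (forall x, a < x < b -> 0 < Q x) -> W a0 = 0 -> V a0 = 0 ->
  (forall x, a <= x <= b -> Rabs (W x) <= 1/2) ->
  (forall x, a0 < x < b -> 0 < W x /\ Rabs (W x) < 1/2 /\ 0 < V x) /\
  (forall x, a < x < a0 -> W x < 0 /\ Rabs (W x) < 1/2 /\ 0 < V x).
Proof.
  intros Ha0 HQ HWa0 HVa0 HW.
  assert (HWlt : forall x y, a <= x -> x < y -> y <= b -> W x < W y).
  { intros x y Hx Hxy Hy. apply (lt_of_is_derive_pos W Q x y Hxy); auto.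
    intros z Hz. apply HQ. lra. }
  assert (HWb : W b <= 1/2) by (pose proof (HW b ltac:(lra)); pose proof (Rle_abs (W b)); lra).
  assert (HWa : - (1/2) <= W a).
  { pose proof (HW a ltac:(lra)). pose proof (Rle_abs (- W a)). rewrite Rabs_Ropp in *. lra. }
  split; intros x Hx.
  - pose proof (HWlt a0 x ltac:(lra) ltac:(lra) ltac:(lra)).
    pose proof (HWlt x b ltac:(lra) ltac:(lra) ltac:(lra)).
    split; [lra | split; [apply Rabs_def1; lra|]].
    rewrite <- HVa0. apply (lt_of_is_derive_pos V W a0 x ltac:(lra)); auto.
    intros z Hz. rewrite <- HWa0. apply HWlt; lra.
  - pose proof (HWlt x a0 ltac:(lra) ltac:(lra) ltac:(lra)).
    pose proof (HWlt a x ltac:(lra) ltac:(lra) ltac:(lra)).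
    split; [lra | split; [apply Rabs_def1; lra|]].
    apply Ropp_lt_cancel. rewrite <- HVa0.
    apply (lt_of_is_derive_pos (fun z => - V z) (fun z => - W z) x a0 ltac:(lra)).
    + intros z _. exact (is_derive_opp V z (W z) (V_deriv z)).
    + intros z Hz. assert (W z < W a0) by (apply HWlt; lra). lra.
Qed.

Lemma quotient_sign_changes_Qpos k a b a0 :
  0 < k -> a <= a0 <= b -> (forall x, a < x < b -> Q x <> 0) -> 0 < Q a0 ->
  W a0 = 0 -> V a0 = 0 -> (forall x, a <= x <= b -> Rabs (W x) <= 1/2) ->
  sign_changes_at_most (fun x => a <= x <= b /\ W x <> 0) (Derive (quotient k)) 7.
Proof.
  intros Hk Ha0 HQ HQa0 HWa0 HVa0 HW.
  assert (HQpos : forall x, a < x < b -> 0 < Q x).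
  { intros x Hx.
    assert (Hcont : continuity Q).
    { intros z. apply derivable_continuous_pt. eexists. apply is_derive_Reals, Q_deriv. }
    pose proof (same_sign_of_nonvanishing Q a b a0 Hcont Ha0 ltac:(lra) HQ x Hx). nra. }
  destruct (W_V_signs a b a0 Ha0 HQpos HWa0 HVa0 HW) as [Hright Hleft].
  assert (SR : sign_changes_at_most (fun x => a0 < x < b) (Derive (quotient k)) 2).
  { refine (quotient_sign_changes_interval a0 b _ _ _ a0 (or_introl eq_refl) HWa0 HVa0 HQa0 k Hk _).
    - intros x Hx. apply HQpos. lra.
    - intros x Hx. apply Hright, Hx.
    - left. intros x Hx. apply Hright, Hx.
    - intros x Hx. apply Hright, Hx. }
  assert (SL : sign_changes_at_most (fun x => a < x < a0) (Derive (quotient k)) 2).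
  { refine (quotient_sign_changes_interval a a0 _ _ _ a0 (or_intror eq_refl) HWa0 HVa0 HQa0 k Hk _).
    - intros x Hx. apply HQpos. lra.
    - intros x Hx. apply Hleft, Hx.
    - right. intros x Hx. apply Hleft, Hx.
    - intros x Hx. apply Hleft, Hx. }
  assert (SL' : sign_changes_at_most (fun x => a <= x < a0) (Derive (quotient k)) 3).
  { apply (sign_changes_subset (fun x => x = a \/ a < x < a0)); [intros x Hx; lra|].
    apply (sign_changes_union (fun x => x = a) (fun x => a < x < a0) _ 0 2); auto.
    - intros; lra.
    - apply sign_changes_point. }
  assert (SR' : sign_changes_at_most (fun x => a0 < x <= b) (Derive (quotient k)) 3).
  { apply (sign_changes_subset (fun x => a0 < x < b \/ x = b)); [intros x Hx; lra|].
    apply (sign_changes_union (fun x => a0 < x < b) (fun x => x = b) _ 2 0); auto.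
    - intros; lra.
    - apply sign_changes_point. }
  refine (sign_changes_subset _ _ _ _ _
    (sign_changes_union (fun x => a <= x < a0) (fun x => a0 < x <= b) _ 3 3
       ltac:(intros; lra) SL' SR')).
  intros x [Hx HWx].
  destruct (Req_dec x a0) as [->|Hne]; [contradiction|].
  destruct (Rlt_le_dec x a0); [left|right]; lra.
Qed.

End Phase.

Lemma quotient_opp W V k y :
  quotient (fun x => - W x) (fun x => - V x) k y = - quotient W V k y.
Proof.
  unfold quotient. rewrite Rdiv_opp_l, Rabs_Ropp, Ropp_mult_distr_r_reverse, sin_neg.
  apply Rdiv_opp_r.
Qed.

Lemma quotient_sign_changes W Q V l k a b a0 :
  (forall x, is_derive W x (Q x)) -> (forall x, is_derive Q x (- (W x + l))) ->
  (forall x, is_derive V x (W x)) ->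
  0 < k -> a <= a0 <= b -> (forall x, a < x < b -> Q x <> 0) -> Q a0 <> 0 ->
  W a0 = 0 -> V a0 = 0 -> (forall x, a <= x <= b -> Rabs (W x) <= 1/2) ->
  sign_changes_at_most (fun x => a <= x <= b /\ W x <> 0) (Derive (quotient W V k)) 7.
Proof.
  intros HW HQ HV Hk Ha0 HQne HQa0 HWa0 HVa0 HWbound.
  destruct (Rlt_le_dec 0 (Q a0)) as [Hpos|Hnpos].
  { apply (quotient_sign_changes_Qpos W Q V l HW HQ HV k a b a0); auto. }
  (* negating [W], [Q], [V] and [l] preserves the hypotheses and negates the quotient *)
  assert (Hneg : sign_changes_at_most (fun x => a <= x <= b /\ - W x <> 0)
                   (Derive (quotient (fun x => - W x) (fun x => - V x) k)) 7).
  { refine (quotient_sign_changes_Qpos (fun x => - W x) (fun x => - Q x) (fun x => - V x) (- l)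
      _ _ _ k a b a0 Hk Ha0 _ _ _ _ _).
    - intros x. apply (is_derive_opp W x (Q x)), HW.
    - intros x. replace (- (- W x + - l)) with (- (- (W x + l))) by ring.
      apply (is_derive_opp Q x), HQ.
    - intros x. apply (is_derive_opp V x (W x)), HV.
    - intros x Hx HQx. apply (HQne x Hx). lra.
    - assert (Q a0 < 0) by (destruct Hnpos; [lra | contradiction]). lra.
    - rewrite HWa0. ring.
    - rewrite HVa0. ring.
    - intros x Hx. rewrite Rabs_Ropp. auto. }
  apply (sign_changes_transfer _ _ (Derive (quotient (fun x => - W x) (fun x => - V x) k))).
  - intros x y _ _ Hxy.
    rewrite !(Derive_ext _ _ _ (quotient_opp W V k)), !Derive_opp. lra.
  - revert Hneg. apply sign_changes_subset. intros x [Hx HWx]. split; [exact Hx | lra].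
Qed.

Lemma Derive_Phi m x0 a : Derive (Phi m x0) a = IZR m * (fst x0 * sin a - snd x0 * cos a).
Proof. apply is_derive_unique. unfold Phi. auto_derive; auto. ring. Qed.

Lemma Derive_Derive_Phi m x0 a :
  Derive (Derive (Phi m x0)) a = IZR m * (fst x0 * cos a + snd x0 * sin a).
Proof.
  rewrite (Derive_ext _ _ _ (Derive_Phi m x0)).
  apply is_derive_unique. auto_derive; auto. ring.
Qed.

Lemma Derive_Phil kappa m l x0 a :
  Derive (Phil kappa m l x0) a = Derive (Phi m x0) a - IZR l / kappa.
Proof.
  rewrite Derive_Phi. apply is_derive_unique. unfold Phil, Phi. auto_derive; auto. ring.
Qed.

Lemma is_derive_scaled_Derive_Phil kappa m l x0 a :
  is_derive (fun x => kappa * Derive (Phil kappa m l x0) x) a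
    (kappa * Derive (Derive (Phi m x0)) a).
Proof.
  apply (is_derive_ext (fun x => kappa * (IZR m * (fst x0 * sin x - snd x0 * cos x) - IZR l / kappa))).
  { intros t. rewrite Derive_Phil, Derive_Phi. reflexivity. }
  rewrite Derive_Derive_Phi. auto_derive; auto. ring.
Qed.

Lemma is_derive_scaled_Derive_Derive_Phi kappa m l x0 a : kappa <> 0 ->
  is_derive (fun x => kappa * Derive (Derive (Phi m x0)) x) a
    (- (kappa * Derive (Phil kappa m l x0) a + IZR l)).
Proof.
  intros Hk. apply (is_derive_ext (fun x => kappa * (IZR m * (fst x0 * cos x + snd x0 * sin x)))).
  { intros t. rewrite Derive_Derive_Phi. reflexivity. }
  rewrite Derive_Phil, Derive_Phi. auto_derive; auto. field. auto.
Qed.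

Lemma is_derive_scaled_u_fun kappa m l x0 a0 a :
  is_derive (fun x => kappa * u_fun kappa m l x0 a0 x) a (kappa * Derive (Phil kappa m l x0) a).
Proof.
  rewrite Derive_Phil, Derive_Phi. unfold u_fun, Phil, Phi. auto_derive; auto. ring.
Qed.

Lemma f_fun_eq kappa m l x0 a0 x : kappa <> 0 ->
  f_fun kappa m l x0 a0 x =
  Derive (quotient (fun y => kappa * Derive (Phil kappa m l x0) y)
                   (fun y => kappa * u_fun kappa m l x0 a0 y) kappa) x.
Proof.
  intros Hk. apply Derive_ext. intros y. unfold quotient.
  replace (kappa * u_fun kappa m l x0 a0 y / kappa) with (u_fun kappa m l x0 a0 y) by (field; auto).
  rewrite Rmult_assoc. reflexivity.
Qed.

Theorem mainTheorem11 :
  forall (kappa : R) (x0 : R * R),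
    0 < kappa ->
    irrational (kappa * norm2 x0) ->
    exists N : nat,
      forall (m l : Z) (a b alpha0 : R),
        m <> 0%Z ->
        -PI <= a -> a <= b -> b <= PI ->
        (* (1) *)
        (forall alpha, a < alpha < b -> Derive (Derive (Phi m x0)) alpha <> 0) ->
        (* (2) *)
        a <= alpha0 <= b ->
        kappa * Derive (Phi m x0) alpha0 = IZR l ->
        Derive (Derive (Phi m x0)) alpha0 <> 0 ->
        (* (3) *)
        (forall alpha, a <= alpha <= b ->
           Rabs (kappa * Derive (Phi m x0) alpha - IZR l) <= 1 / 2) ->
        sign_changes_at_most
          (fun alpha => a <= alpha <= b /\ Derive (Phil kappa m l x0) alpha <> 0)
          (f_fun kappa m l x0 alpha0) N.
Proof.
  intros kappa x0 Hk _. exists 7%nat.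
  intros m l a b a0 _ _ _ _ HQ Ha0 HWa0 HQa0 HWbound.
  set (W := fun x => kappa * Derive (Phil kappa m l x0) x).
  set (Q := fun x => kappa * Derive (Derive (Phi m x0)) x).
  set (V := fun x => kappa * u_fun kappa m l x0 a0 x).
  assert (HW : forall x, W x = kappa * Derive (Phi m x0) x - IZR l)
    by (intros x; unfold W; rewrite Derive_Phil; field; lra).
  apply (sign_changes_ext _ _ (Derive (quotient W V kappa))); [intros x _; apply f_fun_eq; lra|].
  apply (sign_changes_subset (fun x => a <= x <= b /\ W x <> 0)).
  { intros x [Hx HDx]. split; auto. apply Rmult_integral_contrapositive. split; lra. }
  apply (quotient_sign_changes W Q V (IZR l) kappa a b a0); auto.
  - intros x. apply is_derive_scaled_Derive_Phil.
  - intros x. apply is_derive_scaled_Derive_Derive_Phi. lra.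
  - intros x. apply is_derive_scaled_u_fun.
  - intros x Hx. apply Rmult_integral_contrapositive. split; [lra | auto].
  - apply Rmult_integral_contrapositive. split; [lra | auto].
  - rewrite HW, HWa0. lra.
  - unfold V, u_fun. rewrite Rminus_diag, Rmult_0_r. reflexivity.
  - intros x Hx. rewrite HW. auto.
Qed.
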